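(* For $\beta>0$ and every positive integer $m$, \[ \mathbb{E}\Big[\sum_{v\in V(G^n_{m,\beta})}\binom{d(v)}{2}\Big]=\left(\frac{2+5\beta}{2\beta}m^2+\frac{2-\beta}{2\beta}m\right)n+O\!\left(n^{2/(2+\beta)}\right)\qquad(n\to\infty), \] where $d(v)$ is the degree of $v$ in $G^n_{m,\beta}$.
   Context: Fix a real $\beta>0$ and a positive integer $m$. The random tree process $(G^n_{1,\beta})_{n\ge1}$ is defined as follows. $G^1_{1,\beta}$ consists of a single vertex $v_1$ and no edges. Given $G^n_{1,\beta}$ with vertices $v_1,\dots,v_n$ and directed edges $e_2,\dots,e_n$ (where $e_i$ is the edge whose tail is $v_i$), $G^{n+1}_{1,\beta}$ is obtained by adding a vertex $v_{n+1}$ and a directed edge $e_{n+1}$ with tail $v_{n+1}$ and head a ''target vertex'' determined by a random variable $f_{n+1}$, independent of $f_2,\dots,f_n$, taking values in $\Omega_{n+1}=\{(i,v):1\le i\le n\}\cup\{(i,h),(i,t):2\le i\le n\}$ with $\Pr(f_{n+1}=(i,v))=\beta/((2+\beta)n-2)$ and $\Pr(f_{n+1}=(i,h))=\Pr(f_{n+1}=(i,t))=1/((2+\beta)n-2)$. If $f_{n+1}=(i,v)$ the target is $v_i$ (chosen ''uniformly''); if $f_{n+1}=(i,h)$ the target is the head of $e_i$, and if $f_{n+1}=(i,t)$ the target is the tail $v_i$ of $e_i$ (chosen ''preferentially'', by copying the head half-edge, resp. tail half-edge, of $e_i$). Consequently the target is $v_i$ with probability $(d_n(v_i)+\beta)/((2+\beta)n-2)$,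 where $d_n(v)$ is the degree of $v$ in $G^n_{1,\beta}$. Each edge is regarded as two half-edges, one at each endpoint; the degree of a vertex is the number of half-edges at it (loops count twice). For $n\ge1$, $G^n_{m,\beta}$ is the undirected multigraph obtained from $G^{nm}_{1,\beta}$ by identifying, for each $j=1,\dots,n$, the vertices $v_{(j-1)m+1},\dots,v_{jm}$ into a single vertex $w_j$, keeping all edges (so loops and multiple edges may occur). Thus $\sum_v\binom{d(v)}{2}$ equals the number of unordered pairs of distinct half-edges with a common endpoint. *)

From Stdlib Require Import Reals Lra Lia Arith List Bool.
Import ListNotations.
Open Scope R_scope.

(* A realisation of G^N_{1,beta} is encoded by the list hs of heads:
   nth (i-2) hs = index of the head of edge e_i (tail v_i), i = 2..N.
   A distribution is a list of (probability weight, realisation). *)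

(* One step: from G^n_{1,beta} (list of n-1 heads) to G^{n+1}_{1,beta},
   enumerating Omega_{n+1} = {(i,v) : 1<=i<=n} u {(i,h),(i,t) : 2<=i<=n}. *)
Definition step (beta : R) (n : nat) (st : R * list nat) : list (R * list nat) :=
  let (w, hs) := st in
  let D := (2 + beta) * INR n - 2 in
     map (fun i => (w * (beta / D), hs ++ [i])) (seq 1 n)
  ++ map (fun i => (w * (1 / D), hs ++ [nth (i - 2) hs 0%nat])) (seq 2 (n - 1))
  ++ map (fun i => (w * (1 / D), hs ++ [i])) (seq 2 (n - 1)).

Fixpoint dist (beta : R) (n : nat) : list (R * list nat) :=
  match n with
  | O => [(1, [])]
  | S O => [(1, [])]
  | S k => flat_map (step beta k) (dist beta k)
  end.

Definition deg1 (hs : list nat) (x : nat) : nat :=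
  ((if (2 <=? x)%nat && (x <=? length hs + 1)%nat then 1 else 0)
   + count_occ Nat.eq_dec hs x)%nat.

(* Degree of w_j in G^n_{m,beta}: sum of degrees of v_{(j-1)m+1}, ..., v_{jm}. *)
Definition degm (m : nat) (hs : list nat) (j : nat) : nat :=
  fold_right Nat.add 0%nat (map (deg1 hs) (seq ((j - 1) * m + 1) m)).

Definition binom2 (d : nat) : nat := (d * (d - 1) / 2)%nat.

Definition pair_count (m n : nat) (hs : list nat) : nat :=
  fold_right Nat.add 0%nat (map (fun j => binom2 (degm m hs j)) (seq 1 n)).

Definition expected_pairs (beta : R) (m n : nat) : R :=
  fold_right (fun p acc => fst p * INR (pair_count m n (snd p)) + acc) 0
             (dist beta (n * m)).

From Pilot Require Import Defs.
From Stdlib Require Import Reals Lra Lia List Bool Psatz.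
Import ListNotations.
Open Scope R_scope.

(* Work in G^t_{1,beta} and split its vertices into blocks of m consecutive vertices,
   which become the vertices of G^n_{m,beta} when t = nm.  The key quantity is the pair
   statistic Q_t = sum of d(x) d(y) over ordered pairs x, y in a common block; for
   t = nm the pair count equals (Q_t - 2(t-1))/2 (handshake lemma).
   - Generic finite sums, and expectations over the enumerated law [dist]: one step of
     the process attaches v_{t+1} to v_x with probability (beta + d(x))/((2+beta)t - 2).
   - Adding one edge changes Q by an explicit amount; taking expectations gives an exact
     linear recursion for q_t = E Q_t driven by h_t, the expected number of heads already
     received by the unfinished block of v_{t+1}.
   - h_t obeys its own recursion and vanishes when a block opens, so h_t = O(1/t).
   - After removing the linear main term and a bounded m-periodic correction, the error
     e_t satisfies |e_{t+1} - (1 + 2/((2+beta)t - 2)) e_t| = O(1/t); a discrete Gronwall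
     argument comparing with t^{2/(2+beta)} gives e_t = O(t^{2/(2+beta)}).
   - At t = nm the correction vanishes, which yields the theorem. *)

Definition rsum (l : list nat) (f : nat -> R) : R :=
  fold_right (fun x acc => f x + acc) 0 l.

Lemma rsum_nil f : rsum [] f = 0.
Proof. reflexivity. Qed.

Lemma rsum_cons a l f : rsum (a :: l) f = f a + rsum l f.
Proof. reflexivity. Qed.

Lemma rsum_app l1 l2 f : rsum (l1 ++ l2) f = rsum l1 f + rsum l2 f.
Proof.
  induction l1 as [|a l1 IH]; cbn [app]; [rewrite rsum_nil; ring|].
  rewrite !rsum_cons, IH; ring.
Qed.

Lemma rsum_ext l f g : (forall x, In x l -> f x = g x) -> rsum l f = rsum l g.
Proof.
  induction l as [|a l IH]; intros H; [reflexivity|].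
  rewrite !rsum_cons, H, IH; auto with datatypes.
Qed.

Lemma rsum_add l f g : rsum l (fun x => f x + g x) = rsum l f + rsum l g.
Proof. induction l as [|a l IH]; [simpl; ring|]. rewrite !rsum_cons, IH; ring. Qed.

Lemma rsum_scal l c f : rsum l (fun x => c * f x) = c * rsum l f.
Proof. induction l as [|a l IH]; [simpl; ring|]. rewrite !rsum_cons, IH; ring. Qed.

Lemma rsum_const l c : rsum l (fun _ => c) = INR (length l) * c.
Proof.
  induction l as [|a l IH]; [simpl; ring|].
  rewrite rsum_cons, IH; cbn [length]; rewrite S_INR; ring.
Qed.

Lemma rsum_swap l1 l2 F :
  rsum l1 (fun x => rsum l2 (fun y => F x y)) = rsum l2 (fun y => rsum l1 (fun x => F x y)).
Proof.
  induction l1 as [|a l1 IH].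
  - rewrite rsum_nil, (rsum_ext _ _ (fun _ => 0)), rsum_const by reflexivity. ring.
  - rewrite rsum_cons, IH, <- rsum_add. reflexivity.
Qed.

Lemma rsum_map (h : nat -> nat) l f : rsum (map h l) f = rsum l (fun x => f (h x)).
Proof. induction l as [|a l IH]; [reflexivity|]. cbn [map]. rewrite !rsum_cons, IH. reflexivity. Qed.

Lemma rsum_seq_last t F : rsum (seq 1 (S t)) F = rsum (seq 1 t) F + F (S t).
Proof. rewrite seq_S, rsum_app. cbn. replace (S t) with (1 + t)%nat by lia. ring. Qed.

Lemma rsum_abs_le l f G :
  (forall x, In x l -> Rabs (f x) <= G) -> Rabs (rsum l f) <= INR (length l) * G.
Proof.
  induction l as [|a l IH]; intros H; [rewrite rsum_nil, Rabs_R0; simpl; lra|].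
  rewrite rsum_cons; cbn [length]; rewrite S_INR.
  pose proof (Rabs_triang (f a) (rsum l f)).
  assert (Rabs (f a) <= G) by auto with datatypes.
  assert (Rabs (rsum l f) <= INR (length l) * G) by auto with datatypes.
  lra.
Qed.

Lemma INR_sum_nat l (g : nat -> nat) :
  INR (fold_right Nat.add 0%nat (map g l)) = rsum l (fun x => INR (g x)).
Proof. induction l as [|a l IH]; [reflexivity|]. cbn. rewrite plus_INR, IH. reflexivity. Qed.

Definition kron (y a : nat) : R := if Nat.eqb y a then 1 else 0.

Lemma rsum_kron l a g : NoDup l -> In a l -> rsum l (fun y => kron y a * g y) = g a.
Proof.
  induction l as [|b l IH]; intros Hn Hi; [destruct Hi|].
  inversion Hn as [|? ? Hb Hl]; subst. rewrite rsum_cons. unfold kron at 1.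
  destruct Hi as [->|Hi].
  - rewrite Nat.eqb_refl, (rsum_ext _ _ (fun _ => 0)), rsum_const; [ring|].
    intros x Hx. unfold kron. destruct (Nat.eqb_spec x a); [subst; contradiction|ring].
  - destruct (Nat.eqb_spec b a); [subst; contradiction|]. rewrite IH; auto; ring.
Qed.

Lemma rsum_count l L g : NoDup L -> (forall y, In y l -> In y L) ->
  rsum l g = rsum L (fun x => INR (count_occ Nat.eq_dec l x) * g x).
Proof.
  intros HL. induction l as [|a l IH]; intros Hin.
  - rewrite rsum_nil, (rsum_ext L _ (fun _ => 0)), rsum_const; [ring | intros; simpl; ring].
  - rewrite rsum_cons, IH by auto with datatypes.
    rewrite (rsum_ext L (fun x => INR (count_occ Nat.eq_dec (a :: l) x) * g x)
               (fun x => kron x a * g x + INR (count_occ Nat.eq_dec l x) * g x)).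
    + rewrite rsum_add, rsum_kron; auto with datatypes.
    + intros x _. cbn [count_occ]. unfold kron.
      destruct (Nat.eq_dec a x), (Nat.eqb_spec x a); subst; try congruence;
        rewrite ?S_INR; ring.
Qed.

Definition expect (l : list (R * list nat)) (f : list nat -> R) : R :=
  fold_right (fun p acc => fst p * f (snd p) + acc) 0 l.

Lemma expect_app l1 l2 f : expect (l1 ++ l2) f = expect l1 f + expect l2 f.
Proof. unfold expect; induction l1 as [|p l1 IH]; cbn; [ring|]. rewrite IH; ring. Qed.

Lemma expect_ext l f g :
  (forall p, In p l -> f (snd p) = g (snd p)) -> expect l f = expect l g.
Proof.
  unfold expect; induction l as [|p l IH]; intros H; [reflexivity|]. cbn.
  rewrite H, IH; auto with datatypes.
Qed.

Lemma expect_affine l a b c f g :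
  expect l (fun h => a * f h + b * g h + c)
  = a * expect l f + b * expect l g + c * expect l (fun _ => 1).
Proof. unfold expect; induction l as [|p l IH]; cbn; [ring|]. rewrite IH; ring. Qed.

Lemma expect_flat_map l G f F :
  (forall p, expect (G p) f = fst p * F (snd p)) -> expect (flat_map G l) f = expect l F.
Proof.
  intros H. induction l as [|p l IH]; [reflexivity|].
  cbn [flat_map]. rewrite expect_app, H, IH. reflexivity.
Qed.

Lemma expect_map (l : list nat) w (a : nat -> R) (G : nat -> list nat) f :
  expect (map (fun i => (w * a i, G i)) l) f = w * rsum l (fun i => a i * f (G i)).
Proof.
  induction l as [|i l IH]; [cbn; ring|].
  cbn [map]. rewrite rsum_cons. cbn. unfold expect in IH. rewrite IH; ring.
Qed.

(* Total attachment weight of G^t_{1,beta}: sum over its t vertices of beta + degree. *)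
Definition tot_weight (beta : R) (t : nat) : R := (2 + beta) * INR t - 2.

Lemma tot_weight_pos beta t : 0 < beta -> (1 <= t)%nat -> 0 < tot_weight beta t.
Proof. intros Hb Ht. unfold tot_weight. apply le_INR in Ht. simpl in Ht. nra. Qed.

Lemma tot_weight_ge beta t : 0 < beta -> (2 <= t)%nat -> INR t <= tot_weight beta t.
Proof. intros Hb Ht. unfold tot_weight. apply le_INR in Ht. simpl in Ht. nra. Qed.

Definition step_exp (beta : R) (t : nat) (hs : list nat) (f : list nat -> R) : R :=
  rsum (seq 1 t) (fun i => beta / tot_weight beta t * f (hs ++ [i]))
  + rsum (seq 2 (t - 1)) (fun i => 1 / tot_weight beta t * f (hs ++ [nth (i - 2) hs 0%nat]))
  + rsum (seq 2 (t - 1)) (fun i => 1 / tot_weight beta t * f (hs ++ [i])).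

Lemma expect_step beta t w hs f :
  expect (step beta t (w, hs)) f = w * step_exp beta t hs f.
Proof.
  unfold step, step_exp, tot_weight. rewrite !expect_app.
  rewrite (expect_map _ w (fun _ => beta / ((2 + beta) * INR t - 2)) (fun i => hs ++ [i])).
  rewrite (expect_map _ w (fun _ => 1 / ((2 + beta) * INR t - 2))
             (fun i => hs ++ [nth (i - 2) hs 0%nat])).
  rewrite (expect_map _ w (fun _ => 1 / ((2 + beta) * INR t - 2)) (fun i => hs ++ [i])).
  ring.
Qed.

Lemma expect_dist_succ beta t f : (1 <= t)%nat ->
  expect (Defs.dist beta (S t)) f = expect (Defs.dist beta t) (fun hs => step_exp beta t hs f).
Proof.
  intros Ht. destruct t as [|t']; [lia|].
  apply expect_flat_map. intros [w hs]. apply expect_step.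
Qed.

Definition heads_ok (t : nat) (hs : list nat) : Prop :=
  length hs = (t - 1)%nat /\ Forall (fun y => (1 <= y <= t)%nat) hs.

Lemma dist_heads_ok beta t p : (1 <= t)%nat -> In p (Defs.dist beta t) -> heads_ok t (snd p).
Proof.
  intros Ht. revert p. induction t as [|t IH]; [lia|]. intros p.
  destruct t as [|t'].
  - intros [<-|[]]. split; simpl; auto.
  - change (Defs.dist beta (S (S t'))) with (flat_map (step beta (S t')) (Defs.dist beta (S t'))).
    intros Hp. apply in_flat_map in Hp. destruct Hp as [[w hs] [Hin Hp]].
    destruct (IH ltac:(lia) _ Hin) as [Hl Hf]; simpl in Hl, Hf.
    assert (Hw : Forall (fun y => (1 <= y <= S (S t'))%nat) hs).
    { eapply Forall_impl; [|exact Hf]. simpl; intros; lia. }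
    unfold step in Hp. rewrite !in_app_iff in Hp.
    destruct Hp as [Hp|[Hp|Hp]]; apply in_map_iff in Hp; destruct Hp as [i [<- Hi]];
      apply in_seq in Hi; simpl;
      (split; [rewrite length_app; simpl; lia | apply Forall_app; split; auto; constructor; auto]).
    + lia.
    + rewrite Forall_forall in Hw. apply Hw, nth_In. lia.
    + lia.
Qed.

Lemma step_exp_one beta t hs : 0 < beta -> (1 <= t)%nat -> step_exp beta t hs (fun _ => 1) = 1.
Proof.
  intros Hb Ht. unfold step_exp. rewrite !rsum_const, !length_seq.
  pose proof (tot_weight_pos beta t Hb Ht). rewrite minus_INR by lia.
  unfold tot_weight in *. simpl. field. lra.
Qed.

Lemma dist_mass beta t : 0 < beta -> (1 <= t)%nat -> expect (Defs.dist beta t) (fun _ => 1) = 1.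
Proof.
  intros Hb Ht. induction t as [|t IH]; [lia|].
  destruct t as [|t']; [cbn; ring|].
  rewrite expect_dist_succ by lia.
  rewrite (expect_ext _ _ (fun _ => 1)); [apply IH; lia|].
  intros; apply step_exp_one; auto; lia.
Qed.

(** * Degrees and preferential attachment *)

Definition degr (hs : list nat) (x : nat) : R := INR (deg1 hs x).
Definition has_tail (t x : nat) : R := if (2 <=? x)%nat && (x <=? t)%nat then 1 else 0.

Lemma degr_split hs x :
  degr hs x = has_tail (S (length hs)) x + INR (count_occ Nat.eq_dec hs x).
Proof.
  unfold degr, deg1, has_tail. rewrite plus_INR.
  replace (length hs + 1)%nat with (S (length hs)) by lia.
  destruct (_ && _); simpl; ring.
Qed.

Lemma has_tail_in t x : (2 <= x <= t)%nat -> has_tail t x = 1.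
Proof.
  intros Hx. unfold has_tail.
  replace ((2 <=? x)%nat && (x <=? t)%nat) with true; [reflexivity|].
  symmetry. apply andb_true_intro; split; apply Nat.leb_le; lia.
Qed.

Lemma rsum_has_tail t f : (1 <= t)%nat ->
  rsum (seq 1 t) (fun x => has_tail t x * f x) = rsum (seq 2 (t - 1)) f.
Proof.
  intros Ht. destruct t as [|t]; [lia|]. cbn [seq]. rewrite rsum_cons.
  replace (S t - 1)%nat with t by lia.
  unfold has_tail at 1. cbn. rewrite Rmult_0_l, Rplus_0_l.
  apply rsum_ext. intros x Hx. apply in_seq in Hx. rewrite has_tail_in by lia. ring.
Qed.

Lemma count_occ_beyond t hs x : heads_ok t hs -> (t < x)%nat -> count_occ Nat.eq_dec hs x = 0%nat.
Proof.
  intros [_ Hf] Hx. apply count_occ_not_In. intro Hin. rewrite Forall_forall in Hf.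
  apply Hf in Hin. lia.
Qed.

Lemma degr_next t hs : heads_ok t hs -> (1 <= t)%nat -> degr hs (S t) = 0.
Proof.
  intros Hv Ht. rewrite degr_split, (count_occ_beyond t) by (auto; lia).
  destruct Hv as [Hl _]. unfold has_tail.
  replace (S t <=? S (length hs))%nat with false by (symmetry; apply Nat.leb_gt; lia).
  rewrite andb_false_r. simpl. ring.
Qed.

Lemma degr_sum t hs : heads_ok t hs -> (1 <= t)%nat -> rsum (seq 1 t) (degr hs) = 2 * (INR t - 1).
Proof.
  intros [Hl Hf] Ht.
  rewrite (rsum_ext _ _ (fun x => has_tail t x * 1 + INR (count_occ Nat.eq_dec hs x) * 1)).
  2: { intros x _. rewrite degr_split. replace (S (length hs)) with t by lia. ring. }
  rewrite rsum_add, rsum_has_tail by auto.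
  rewrite <- (rsum_count hs (seq 1 t)).
  - rewrite !rsum_const, length_seq, Hl, minus_INR by lia. simpl. ring.
  - apply seq_NoDup.
  - intros y Hy. rewrite Forall_forall in Hf. apply Hf in Hy. apply in_seq; lia.
Qed.

Lemma total_weight_sum beta t hs : heads_ok t hs -> (1 <= t)%nat ->
  rsum (seq 1 t) (fun x => beta + degr hs x) = tot_weight beta t.
Proof.
  intros Hv Ht. rewrite rsum_add, rsum_const, length_seq, degr_sum by auto.
  unfold tot_weight. ring.
Qed.

(* Copying the head of a uniformly chosen edge e_i = choosing a head with multiplicity. *)
Lemma rsum_copy_head (hs : list nat) g :
  rsum (seq 2 (length hs)) (fun i => g (nth (i - 2) hs 0%nat)) = rsum hs g.
Proof.
  assert (Hshift : forall k, map (fun i => nth (i - k) hs 0%nat) (seq k (length hs)) = hs).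
  { induction hs as [|a l IH]; intros k; [reflexivity|]. cbn. rewrite Nat.sub_diag. f_equal.
    rewrite <- (IH (S k)) at 2. apply map_ext_in. intros i Hi. apply in_seq in Hi.
    replace (i - k)%nat with (S (i - S k)) by lia. reflexivity. }
  rewrite <- rsum_map, Hshift. reflexivity.
Qed.

Lemma step_exp_pref beta t hs f : (1 <= t)%nat -> heads_ok t hs ->
  step_exp beta t hs f
  = rsum (seq 1 t) (fun x => (beta + degr hs x) / tot_weight beta t * f (hs ++ [x])).
Proof.
  intros Ht [Hl Hf]. unfold step_exp.
  rewrite <- Hl at 1. rewrite (rsum_copy_head hs (fun y => 1 / tot_weight beta t * f (hs ++ [y]))).
  rewrite (rsum_count hs (seq 1 t)).
  2: apply seq_NoDup.
  2: { intros y Hy. rewrite Forall_forall in Hf. apply Hf in Hy. apply in_seq; lia. }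
  rewrite <- (rsum_has_tail t (fun i => 1 / tot_weight beta t * f (hs ++ [i]))) by auto.
  rewrite <- !rsum_add. apply rsum_ext. intros x _. rewrite degr_split.
  replace (S (length hs)) with t by lia. unfold Rdiv. ring.
Qed.

(** * Blocks of m consecutive vertices *)

(* v_x is merged into w_{block_of m x + 1} in G^n_{m,beta}. *)
Definition block_of (m x : nat) : nat := ((x - 1) / m)%nat.
Definition same_block (m x y : nat) : R := if Nat.eqb (block_of m x) (block_of m y) then 1 else 0.

Lemma div_eq_iff m t b : (0 < m)%nat -> ((t / m)%nat = b <-> (b * m <= t < b * m + m)%nat).
Proof.
  intros Hm. split.
  - intros <-. pose proof (Nat.div_mod t m ltac:(lia)). pose proof (Nat.mod_upper_bound t m ltac:(lia)). lia.
  - intros H. symmetry. apply (Nat.div_unique t m b (t - b * m)); lia.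
Qed.

Lemma div_bounds m t : (0 < m)%nat -> (t / m * m <= t < t / m * m + m)%nat.
Proof. intros Hm. now apply div_eq_iff. Qed.

Lemma mod_as_sub m t : (0 < m)%nat -> (t mod m = t - t / m * m)%nat.
Proof. intros Hm. pose proof (Nat.div_mod t m ltac:(lia)). lia. Qed.

Lemma same_block_sym m x y : same_block m x y = same_block m y x.
Proof. unfold same_block. rewrite Nat.eqb_sym. reflexivity. Qed.

Lemma same_block_refl m x : same_block m x x = 1.
Proof. unfold same_block. rewrite Nat.eqb_refl. reflexivity. Qed.

Lemma block_of_succ m t : block_of m (S t) = (t / m)%nat.
Proof. unfold block_of. f_equal. lia. Qed.

Lemma block_of_range m j y : (0 < m)%nat -> (j * m + 1 <= y < j * m + 1 + m)%nat -> block_of m y = j.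
Proof. intros Hm Hy. unfold block_of. apply div_eq_iff; lia. Qed.

Lemma block_of_lt m n x : (0 < m)%nat -> (1 <= x <= n * m)%nat -> (block_of m x < n)%nat.
Proof.
  intros Hm Hx. unfold block_of. pose proof (div_bounds m (x - 1) Hm).
  destruct (Nat.lt_ge_cases ((x - 1) / m) n) as [|Hn]; auto.
  apply (Nat.mul_le_mono_r _ _ m) in Hn. lia.
Qed.

Lemma block_count m t b : (0 < m)%nat ->
  rsum (seq 1 t) (fun y => if Nat.eqb (block_of m y) b then 1 else 0)
  = INR (Nat.min t (b * m + m) - Nat.min t (b * m)).
Proof.
  intros Hm. induction t as [|t IH]; [reflexivity|].
  rewrite seq_S, rsum_app, IH, rsum_cons, rsum_nil.
  replace (1 + t)%nat with (S t) by lia. rewrite block_of_succ.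
  destruct (Nat.eqb_spec (t / m) b) as [E|E].
  - apply div_eq_iff in E; auto. rewrite Rplus_0_r, <- S_INR. f_equal. lia.
  - assert (~ (b * m <= t < b * m + m)%nat) by (rewrite <- div_eq_iff; auto).
    rewrite !Rplus_0_r. f_equal. lia.
Qed.

(* Number of block-mates of v_x among v_1, ..., v_t: m, unless x lies in the
   unfinished block of v_{t+1}, which holds only t mod m vertices. *)
Lemma block_mates m t x : (0 < m)%nat -> (1 <= x <= t)%nat ->
  rsum (seq 1 t) (fun y => same_block m x y)
  = INR m - (INR m - INR (t mod m)) * same_block m x (S t).
Proof.
  intros Hm Hx.
  rewrite (rsum_ext _ _ (fun y => if Nat.eqb (block_of m y) (block_of m x) then 1 else 0)).
  2: { intros y _. unfold same_block. rewrite Nat.eqb_sym. reflexivity. }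
  rewrite block_count by auto. unfold same_block. rewrite block_of_succ.
  pose proof (div_bounds m (x - 1) Hm). pose proof (div_bounds m t Hm).
  rewrite mod_as_sub by auto. unfold block_of.
  destruct (Nat.eqb_spec ((x - 1) / m) (t / m)) as [E|E].
  - rewrite E. replace (Nat.min t (t / m * m + m) - Nat.min t (t / m * m))%nat
      with (t - t / m * m)%nat by lia. ring.
  - assert (~ ((x - 1) / m * m <= t < (x - 1) / m * m + m)%nat).
    { intro HH. apply E. symmetry. apply div_eq_iff; auto. }
    replace (Nat.min t ((x - 1) / m * m + m) - Nat.min t ((x - 1) / m * m))%nat with m by lia.
    ring.
Qed.

Lemma block_prefix m t : (0 < m)%nat ->
  rsum (seq 1 t) (fun x => same_block m x (S t)) = INR (t mod m).
Proof.
  intros Hm. unfold same_block. rewrite block_of_succ, block_count by auto.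
  pose proof (div_bounds m t Hm). rewrite mod_as_sub by auto. f_equal. lia.
Qed.

Lemma same_block_new m t x : (0 < m)%nat -> (t mod m = 0)%nat -> (1 <= x <= t)%nat ->
  same_block m x (S t) = 0.
Proof.
  intros Hm H Hx. unfold same_block. rewrite block_of_succ. unfold block_of.
  rewrite mod_as_sub in H by auto. pose proof (div_bounds m t Hm).
  destruct (Nat.eqb_spec ((x - 1) / m) (t / m)) as [E|E]; auto.
  apply div_eq_iff in E; auto. lia.
Qed.

Lemma block_of_continue m t : (0 < m)%nat -> ((S t) mod m <> 0)%nat ->
  block_of m (S (S t)) = block_of m (S t).
Proof.
  intros Hm H. rewrite !block_of_succ. pose proof (div_bounds m t Hm).
  apply div_eq_iff; auto. rewrite mod_as_sub in H by auto.
  pose proof (div_bounds m (S t) Hm).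
  destruct (Nat.eq_dec (S t) (t / m * m + m)) as [E|]; [|lia].
  exfalso. apply H. assert (Hq : (S t / m)%nat = S (t / m)) by (apply div_eq_iff; lia).
  rewrite Hq. lia.
Qed.

Lemma same_block_ge2 m t x : (0 < m)%nat -> (m <= t)%nat -> (1 <= x <= t)%nat ->
  same_block m x (S t) <> 0 -> (2 <= x)%nat.
Proof.
  intros Hm Ht Hx H. destruct (Nat.eq_dec x 1) as [->|]; [|lia]. exfalso. apply H.
  unfold same_block. rewrite !block_of_succ, Nat.Div0.div_0_l.
  destruct (Nat.eqb_spec 0 (t / m)) as [E|]; [|reflexivity].
  symmetry in E. apply div_eq_iff in E; auto. lia.
Qed.

Lemma mod_succ m t : (0 < m)%nat ->
  ((S t) mod m = if Nat.eqb (t mod m) (m - 1) then 0 else S (t mod m))%nat.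
Proof.
  intros Hm. rewrite !mod_as_sub by auto. pose proof (div_bounds m t Hm).
  destruct (Nat.eqb_spec (t - t / m * m) (m - 1)).
  - assert (Hq : (S t / m)%nat = S (t / m)) by (apply div_eq_iff; lia). rewrite Hq. lia.
  - assert (Hq : (S t / m)%nat = (t / m)%nat) by (apply div_eq_iff; lia). rewrite Hq. lia.
Qed.

(* Sum of d(x) d(y) over ordered pairs of vertices in a common block; for m | t this
   is the sum of the squared degrees of G^{t/m}_{m,beta}. *)
Definition Qstat (m : nat) (hs : list nat) : R :=
  rsum (seq 1 (S (length hs))) (fun x =>
    rsum (seq 1 (S (length hs))) (fun y => same_block m x y * (degr hs x * degr hs y))).

Definition block_deg (m : nat) (hs : list nat) (z : nat) : R :=
  rsum (seq 1 (S (length hs))) (fun x => same_block m x z * degr hs x).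

(* Head half-edges already received by the unfinished block of the next vertex. *)
Definition open_heads (m : nat) (hs : list nat) : R :=
  rsum (seq 1 (S (length hs))) (fun x =>
    same_block m x (S (S (length hs))) * INR (count_occ Nat.eq_dec hs x)).

Lemma has_tail_succ n y : (1 <= n)%nat -> has_tail (S n) y = has_tail n y + kron y (S n).
Proof.
  intros Hn. unfold has_tail, kron.
  destruct (Nat.eqb_spec y (S n)) as [->|E].
  - replace (2 <=? S n)%nat with true by (symmetry; apply Nat.leb_le; lia).
    rewrite Nat.leb_refl. replace (S n <=? n)%nat with false by (symmetry; apply Nat.leb_gt; lia).
    simpl; ring.
  - replace (y <=? S n)%nat with (y <=? n)%nat
      by (destruct (Nat.leb_spec y n), (Nat.leb_spec y (S n)); auto; lia). ring.
Qed.

Lemma degr_add_edge hs x0 y :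
  degr (hs ++ [x0]) y = degr hs y + kron y (S (S (length hs))) + kron y x0.
Proof.
  rewrite !degr_split, length_app, count_occ_app, plus_INR. cbn [length].
  replace (length hs + 1)%nat with (S (length hs)) by lia.
  rewrite has_tail_succ by lia.
  assert (Hx0 : INR (count_occ Nat.eq_dec [x0] y) = kron y x0).
  { cbn. unfold kron. destruct (Nat.eq_dec x0 y), (Nat.eqb_spec y x0); subst; try congruence; simpl; ring. }
  rewrite Hx0. ring.
Qed.

Lemma quad_form_expand (K : nat -> nat -> R) L f g :
  (forall x y, K x y = K y x) ->
  rsum L (fun x => rsum L (fun y => K x y * ((f x + g x) * (f y + g y))))
  = rsum L (fun x => rsum L (fun y => K x y * (f x * f y)))
    + 2 * rsum L (fun x => f x * rsum L (fun y => K x y * g y))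
    + rsum L (fun x => g x * rsum L (fun y => K x y * g y)).
Proof.
  intros HK.
  assert (Hcross : rsum L (fun x => rsum L (fun y => K x y * (g x * f y)))
                   = rsum L (fun x => f x * rsum L (fun y => K x y * g y))).
  { rewrite rsum_swap. apply rsum_ext; intros x _. rewrite <- rsum_scal.
    apply rsum_ext; intros y _. rewrite HK. ring. }
  transitivity (rsum L (fun x => rsum L (fun y => K x y * (f x * f y)))
    + rsum L (fun x => f x * rsum L (fun y => K x y * g y))
    + rsum L (fun x => rsum L (fun y => K x y * (g x * f y)))
    + rsum L (fun x => g x * rsum L (fun y => K x y * g y))).
  - rewrite <- !rsum_add. apply rsum_ext; intros x _. rewrite <- !rsum_scal, <- !rsum_add.
    apply rsum_ext; intros y _. ring.
  - rewrite Hcross. ring.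
Qed.

Lemma heads_ok_length t hs : heads_ok t hs -> (1 <= t)%nat -> S (length hs) = t.
Proof. intros [Hl _] Ht. lia. Qed.

Section AddEdge.

Variables (m t : nat) (hs : list nat) (x0 : nat).
Hypotheses (Hv : heads_ok t hs) (Ht : (1 <= t)%nat) (Hx0 : (1 <= x0 <= t)%nat).

Let g (y : nat) : R := kron y (S t) + kron y x0.
Let length_t : S (length hs) = t := heads_ok_length t hs Hv Ht.

Lemma degr_add_edge' y : degr (hs ++ [x0]) y = degr hs y + g y.
Proof. rewrite degr_add_edge, length_t. unfold g. ring. Qed.

Lemma rsum_g_kernel x : rsum (seq 1 (S t)) (fun y => same_block m x y * g y)
                        = same_block m x (S t) + same_block m x x0.
Proof.
  unfold g. rewrite (rsum_ext _ _ (fun y => kron y (S t) * same_block m x y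
                                          + kron y x0 * same_block m x y)) by (intros; ring).
  rewrite rsum_add, !rsum_kron; auto using seq_NoDup; apply in_seq; lia.
Qed.

Lemma Qstat_add_edge :
  Qstat m (hs ++ [x0])
  = Qstat m hs + 2 * block_deg m hs (S t) + 2 * block_deg m hs x0 + 2 + 2 * same_block m (S t) x0.
Proof.
  assert (Hlen : S (length (hs ++ [x0])) = S t) by (rewrite length_app, <- length_t; cbn; lia).
  assert (Hout : degr hs (S t) = 0) by (apply degr_next; auto).
  unfold Qstat, block_deg. rewrite Hlen, length_t.
  rewrite (rsum_ext _ _ (fun x => rsum (seq 1 (S t)) (fun y =>
             same_block m x y * ((degr hs x + g x) * (degr hs y + g y))))).
  2: { intros x _. apply rsum_ext; intros y _. rewrite !degr_add_edge'. reflexivity. }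
  rewrite quad_form_expand by apply same_block_sym.
  rewrite !(rsum_ext (seq 1 (S t)) (fun x => _ * rsum (seq 1 (S t)) (fun y => same_block m x y * g y))
             (fun x => _ * (same_block m x (S t) + same_block m x x0)))
    by (intros; rewrite rsum_g_kernel; reflexivity).
  assert (Hgg : rsum (seq 1 (S t)) (fun x => g x * (same_block m x (S t) + same_block m x x0))
                = 2 + 2 * same_block m (S t) x0).
  { unfold g. rewrite (rsum_ext _ _ (fun x => kron x (S t) * (same_block m x (S t) + same_block m x x0)
                                           + kron x x0 * (same_block m x (S t) + same_block m x x0)))
      by (intros; ring).
    rewrite rsum_add, !rsum_kron; auto using seq_NoDup; try (apply in_seq; lia).
    rewrite !same_block_refl, (same_block_sym m x0). ring. }
  rewrite Hgg.
  (* v_{t+1} has degree 0 in G^t, so the sums may be restricted to 1..t *)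
  rewrite (rsum_ext (seq 1 (S t)) (fun x => rsum (seq 1 (S t)) _)
             (fun x => rsum (seq 1 t) (fun y => same_block m x y * (degr hs x * degr hs y))))
    by (intros; rewrite rsum_seq_last, Hout; ring).
  rewrite !rsum_seq_last, Hout.
  rewrite (rsum_ext (seq 1 t) (fun y => same_block m (S t) y * (0 * degr hs y)) (fun _ => 0))
    by (intros; ring).
  rewrite rsum_const.
  rewrite (rsum_ext (seq 1 t) (fun x => degr hs x * _)
             (fun x => same_block m x (S t) * degr hs x + same_block m x x0 * degr hs x))
    by (intros; ring).
  rewrite rsum_add. ring.
Qed.

Lemma open_heads_add_edge : (0 < m)%nat -> ((S t) mod m <> 0)%nat ->
  open_heads m (hs ++ [x0]) = open_heads m hs + same_block m x0 (S t).
Proof.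
  intros Hm Hmod.
  assert (Hlen : S (length (hs ++ [x0])) = S t) by (rewrite length_app, <- length_t; cbn; lia).
  unfold open_heads. rewrite Hlen, length_t, rsum_seq_last, count_occ_app.
  rewrite (count_occ_beyond t hs (S t)) by (auto; lia).
  cbn [count_occ]. destruct (Nat.eq_dec x0 (S t)); [lia|]. cbn [INR Nat.add].
  rewrite Rmult_0_r, Rplus_0_r.
  rewrite (rsum_ext _ _ (fun x => same_block m x (S t) * INR (count_occ Nat.eq_dec hs x)
                                 + kron x x0 * same_block m x (S t))).
  2: { intros x _. unfold same_block at 1. rewrite block_of_continue by auto. fold (same_block m x (S t)).
       rewrite count_occ_app, plus_INR. cbn [count_occ].
       unfold kron. destruct (Nat.eq_dec x0 x), (Nat.eqb_spec x x0); try congruence; cbn; ring. }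
  rewrite rsum_add, rsum_kron; auto using seq_NoDup. apply in_seq; lia.
Qed.

End AddEdge.

(* The block of v_{t+1} has t mod m earlier members, each carrying its tail half-edge. *)
Lemma block_deg_next m t hs : (0 < m)%nat -> (m <= t)%nat -> heads_ok t hs ->
  block_deg m hs (S t) = INR (t mod m) + open_heads m hs.
Proof.
  intros Hm Ht Hv. pose proof (heads_ok_length t hs Hv ltac:(lia)) as Hlen.
  unfold block_deg, open_heads. rewrite Hlen, <- (block_prefix m t Hm), <- rsum_add.
  apply rsum_ext. intros x Hx. apply in_seq in Hx. rewrite degr_split, Hlen.
  destruct (Req_dec (same_block m x (S t)) 0) as [E|E]; [rewrite E; ring|].
  pose proof (same_block_ge2 m t x Hm Ht ltac:(lia) E).
  rewrite has_tail_in by lia. ring.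
Qed.

Lemma open_heads_new m t hs : (0 < m)%nat -> (1 <= t)%nat -> heads_ok t hs ->
  (t mod m = 0)%nat -> open_heads m hs = 0.
Proof.
  intros Hm Ht Hv Hmod. unfold open_heads. rewrite (heads_ok_length t hs Hv Ht).
  rewrite (rsum_ext _ _ (fun _ => 0)), rsum_const; [ring|].
  intros x Hx. apply in_seq in Hx. rewrite same_block_new; auto; [ring|lia].
Qed.

Section OneStep.

Variables (beta : R) (m t : nat) (hs : list nat).
Hypotheses (Hb : 0 < beta) (Hm : (0 < m)%nat) (Hmt : (m <= t)%nat) (Hv : heads_ok t hs).

Let Ht : (1 <= t)%nat. Proof. lia. Qed.
Let Hlen : S (length hs) = t := heads_ok_length t hs Hv Ht.
Let r : R := INR (t mod m).

Lemma weighted_block_deg_sum :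
  rsum (seq 1 t) (fun z => (beta + degr hs z) * block_deg m hs z)
  = beta * (2 * INR m * (INR t - 1) - (INR m - r) * block_deg m hs (S t)) + Qstat m hs.
Proof.
  unfold block_deg, Qstat. rewrite Hlen.
  rewrite (rsum_ext _ _ (fun z => rsum (seq 1 t) (fun x =>
             (beta + degr hs z) * (same_block m x z * degr hs x))))
    by (intros; rewrite <- rsum_scal; reflexivity).
  rewrite rsum_swap.
  rewrite (rsum_ext _ _ (fun x => beta * degr hs x * rsum (seq 1 t) (fun z => same_block m x z)
                                + rsum (seq 1 t) (fun y => same_block m x y * (degr hs x * degr hs y)))).
  2: { intros x _. rewrite <- rsum_scal, <- rsum_add. apply rsum_ext; intros; ring. }
  rewrite rsum_add. f_equal.
  rewrite (rsum_ext _ _ (fun x => (beta * INR m) * degr hs x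
                                + (- (beta * (INR m - r))) * (same_block m x (S t) * degr hs x))).
  2: { intros x Hx. apply in_seq in Hx. rewrite block_mates by (auto; lia). unfold r. ring. }
  rewrite rsum_add, !rsum_scal, degr_sum by auto. ring.
Qed.

Lemma weighted_same_block_sum :
  rsum (seq 1 t) (fun z => (beta + degr hs z) * same_block m (S t) z)
  = beta * r + block_deg m hs (S t).
Proof.
  rewrite (rsum_ext _ _ (fun z => beta * same_block m z (S t) + same_block m z (S t) * degr hs z))
    by (intros; rewrite same_block_sym; ring).
  rewrite rsum_add, rsum_scal, block_prefix by auto. unfold block_deg. rewrite Hlen. reflexivity.
Qed.

Lemma step_exp_Qstat :
  step_exp beta t hs (Qstat m)
  = (1 + 2 / tot_weight beta t) * Qstat m hs
    + (2 + 2 / tot_weight beta t * (1 - beta * (INR m - r))) * open_heads m hs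
    + (2 * r + 2 + 2 / tot_weight beta t
         * (beta * (2 * INR m * (INR t - 1) - (INR m - r) * r) + (beta + 1) * r)).
Proof.
  pose proof (tot_weight_pos beta t Hb Ht) as HD.
  set (D := tot_weight beta t) in *. set (Bn := block_deg m hs (S t)).
  rewrite step_exp_pref by auto.
  rewrite (rsum_ext _ _ (fun z => (Qstat m hs + 2 * Bn + 2) / D * (beta + degr hs z)
                                 + 2 / D * ((beta + degr hs z) * block_deg m hs z)
                                 + 2 / D * ((beta + degr hs z) * same_block m (S t) z))).
  2: { intros z Hz. apply in_seq in Hz. rewrite (Qstat_add_edge m t) by (auto; lia).
       fold Bn D. field. lra. }
  rewrite !rsum_add, !rsum_scal, total_weight_sum, weighted_block_deg_sum,
    weighted_same_block_sum by auto.
  fold D Bn. unfold Bn. rewrite block_deg_next by auto. fold r. field. lra.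
Qed.

Lemma step_exp_open_heads : ((S t) mod m <> 0)%nat ->
  step_exp beta t hs (open_heads m)
  = (1 + 1 / tot_weight beta t) * open_heads m hs + (beta + 1) * r / tot_weight beta t.
Proof.
  intros Hmod. pose proof (tot_weight_pos beta t Hb Ht) as HD.
  rewrite step_exp_pref by auto.
  rewrite (rsum_ext _ _ (fun z => open_heads m hs / tot_weight beta t * (beta + degr hs z)
                   + 1 / tot_weight beta t * ((beta + degr hs z) * same_block m (S t) z))).
  2: { intros z Hz. apply in_seq in Hz. rewrite (open_heads_add_edge m t) by (auto; lia).
       rewrite same_block_sym. field. lra. }
  rewrite rsum_add, !rsum_scal, total_weight_sum, weighted_same_block_sum by auto.
  rewrite block_deg_next by auto. fold r. field. lra.
Qed.

End OneStep.

Definition q_exp (beta : R) (m t : nat) : R := expect (Defs.dist beta t) (Qstat m).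
Definition h_exp (beta : R) (m t : nat) : R := expect (Defs.dist beta t) (open_heads m).

Lemma q_exp_succ beta m t : 0 < beta -> (0 < m)%nat -> (m <= t)%nat ->
  q_exp beta m (S t)
  = (1 + 2 / tot_weight beta t) * q_exp beta m t
    + (2 + 2 / tot_weight beta t * (1 - beta * (INR m - INR (t mod m)))) * h_exp beta m t
    + (2 * INR (t mod m) + 2 + 2 / tot_weight beta t
         * (beta * (2 * INR m * (INR t - 1) - (INR m - INR (t mod m)) * INR (t mod m))
            + (beta + 1) * INR (t mod m))).
Proof.
  intros Hb Hm Ht. unfold q_exp, h_exp. rewrite expect_dist_succ by lia.
  set (r := INR (t mod m)). set (D := tot_weight beta t).
  rewrite (expect_ext _ _ (fun hs => (1 + 2 / D) * Qstat m hs
      + (2 + 2 / D * (1 - beta * (INR m - r))) * open_heads m hs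
      + (2 * r + 2 + 2 / D * (beta * (2 * INR m * (INR t - 1) - (INR m - r) * r) + (beta + 1) * r)))).
  2: { intros p Hp. apply step_exp_Qstat; auto. apply (dist_heads_ok beta); auto; lia. }
  rewrite expect_affine, dist_mass by (auto; lia). ring.
Qed.

Lemma h_exp_succ beta m t : 0 < beta -> (0 < m)%nat -> (m <= t)%nat -> ((S t) mod m <> 0)%nat ->
  h_exp beta m (S t)
  = (1 + 1 / tot_weight beta t) * h_exp beta m t + (beta + 1) * INR (t mod m) / tot_weight beta t.
Proof.
  intros Hb Hm Ht Hmod. unfold h_exp. rewrite expect_dist_succ by lia.
  rewrite (expect_ext _ _ (fun hs => (1 + 1 / tot_weight beta t) * open_heads m hs
                                    + 0 * open_heads m hs + (beta + 1) * INR (t mod m) / tot_weight beta t)).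
  2: { intros p Hp. rewrite step_exp_open_heads; auto; [ring|]. apply (dist_heads_ok beta); auto; lia. }
  rewrite expect_affine, dist_mass by (auto; lia). ring.
Qed.

Lemma h_exp_new beta m t : (0 < m)%nat -> (1 <= t)%nat -> (t mod m = 0)%nat -> h_exp beta m t = 0.
Proof.
  intros Hm Ht Hmod. unfold h_exp.
  rewrite (expect_ext _ _ (fun hs => 0 * open_heads m hs + 0 * open_heads m hs + 0)).
  2: { intros p Hp. rewrite (open_heads_new m t); auto; [ring|]. apply (dist_heads_ok beta); auto. }
  rewrite expect_affine. ring.
Qed.

(** * The pair count of G^n_{m,beta} in terms of the pair statistic *)

Definition block_range (m j : nat) : list nat := seq ((j - 1) * m + 1) m.

Lemma block_range_succ m n : block_range m (S n) = seq (1 + n * m) m.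
Proof. unfold block_range. f_equal. lia. Qed.

Lemma rsum_blocks m F n :
  rsum (seq 1 (n * m)) F = rsum (seq 1 n) (fun j => rsum (block_range m j) F).
Proof.
  induction n as [|n IH]; [reflexivity|].
  replace (S n * m)%nat with (n * m + m)%nat by lia.
  rewrite seq_app, rsum_app, IH, seq_S, rsum_app, rsum_cons, rsum_nil, Rplus_0_r.
  replace (1 + n)%nat with (S n) by lia. rewrite block_range_succ. reflexivity.
Qed.

Lemma same_block_cross m n x y : (0 < m)%nat -> (1 <= x <= n * m)%nat -> In y (seq (1 + n * m) m) ->
  same_block m x y = 0.
Proof.
  intros Hm Hx Hy. apply in_seq in Hy. unfold same_block.
  rewrite (block_of_range m n y) by lia. pose proof (block_of_lt m n x Hm Hx).
  destruct (Nat.eqb_spec (block_of m x) n); [lia|reflexivity].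
Qed.

Lemma same_block_within m n x y : (0 < m)%nat -> In x (seq (1 + n * m) m) -> In y (seq (1 + n * m) m) ->
  same_block m x y = 1.
Proof.
  intros Hm Hx Hy. apply in_seq in Hx, Hy. unfold same_block.
  rewrite (block_of_range m n x), (block_of_range m n y) by lia. rewrite Nat.eqb_refl. reflexivity.
Qed.

Lemma block_quad_form m F n : (0 < m)%nat ->
  rsum (seq 1 (n * m)) (fun x => rsum (seq 1 (n * m)) (fun y => same_block m x y * (F x * F y)))
  = rsum (seq 1 n) (fun j => rsum (block_range m j) F * rsum (block_range m j) F).
Proof.
  intros Hm. induction n as [|n IH]; [reflexivity|].
  replace (S n * m)%nat with (n * m + m)%nat by lia.
  rewrite seq_S, (rsum_app (seq 1 n)), rsum_cons, rsum_nil, Rplus_0_r.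
  replace (1 + n)%nat with (S n) by lia. rewrite block_range_succ, <- IH, !seq_app, rsum_app.
  set (B := seq (1 + n * m) m).
  rewrite (rsum_ext (seq 1 (n * m)) _
             (fun x => rsum (seq 1 (n * m)) (fun y => same_block m x y * (F x * F y)))).
  2: { intros x Hx. apply in_seq in Hx. rewrite rsum_app.
       rewrite (rsum_ext B _ (fun _ => 0)), rsum_const; [ring|].
       intros y Hy. rewrite (same_block_cross m n) by (auto; lia). ring. }
  rewrite (rsum_ext B _ (fun x => rsum B F * F x)); [rewrite rsum_scal; reflexivity|].
  intros x Hx. rewrite rsum_app.
  rewrite (rsum_ext (seq 1 (n * m)) _ (fun _ => 0)).
  2: { intros y Hy. apply in_seq in Hy. rewrite same_block_sym, (same_block_cross m n) by (auto; lia). ring. }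
  rewrite rsum_const, Rmult_0_r, Rplus_0_l, Rmult_comm, <- rsum_scal.
  apply rsum_ext. intros y Hy. rewrite (same_block_within m n) by auto. ring.
Qed.

Lemma binom2_INR k : INR (binom2 k) = (INR k * INR k - INR k) / 2.
Proof.
  unfold binom2. assert (Heven : exists q, (k * (k - 1) = 2 * q)%nat).
  { induction k as [|k [q Hq]]; [exists 0%nat; lia|]. exists (q + k)%nat. destruct k; simpl in *; nia. }
  destruct Heven as [q Hq]. rewrite Hq, (Nat.mul_comm 2 q), Nat.div_mul by lia.
  assert (Hk : INR (k * (k - 1)) = INR k * INR k - INR k).
  { destruct k; [simpl; ring|]. rewrite mult_INR, minus_INR by lia. simpl (INR 1). ring. }
  rewrite Hq, mult_INR in Hk. simpl (INR 2) in Hk. lra.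
Qed.

Lemma pair_count_Qstat m n hs : (0 < m)%nat -> (1 <= n)%nat -> heads_ok (n * m) hs ->
  INR (pair_count m n hs) = (Qstat m hs - 2 * (INR (n * m) - 1)) / 2.
Proof.
  intros Hm Hn Hv. pose proof (heads_ok_length _ _ Hv ltac:(nia)) as Hlen.
  unfold pair_count. rewrite INR_sum_nat.
  rewrite (rsum_ext _ _ (fun j => / 2 * (rsum (block_range m j) (degr hs) * rsum (block_range m j) (degr hs))
                                + (- / 2) * rsum (block_range m j) (degr hs))).
  2: { intros j _. rewrite binom2_INR. unfold degm. rewrite INR_sum_nat.
       unfold block_range, degr, Rdiv. ring. }
  rewrite rsum_add, !rsum_scal, <- block_quad_form, <- rsum_blocks, degr_sum by (auto; nia).
  unfold Qstat. rewrite Hlen. field.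
Qed.

Lemma expected_pairs_q_exp beta m n : 0 < beta -> (0 < m)%nat -> (1 <= n)%nat ->
  expected_pairs beta m n = (q_exp beta m (n * m) - 2 * (INR (n * m) - 1)) / 2.
Proof.
  intros Hb Hm Hn.
  change (expected_pairs beta m n)
    with (expect (Defs.dist beta (n * m)) (fun hs => INR (pair_count m n hs))).
  unfold q_exp.
  rewrite (expect_ext _ _ (fun hs => / 2 * Qstat m hs + 0 * Qstat m hs + (- (INR (n * m) - 1)))).
  2: { intros p Hp. rewrite pair_count_Qstat; auto; [field|]. apply (dist_heads_ok beta); auto; nia. }
  rewrite expect_affine, dist_mass by (auto; nia). field.
Qed.

(** * The unfinished block receives O(1/t) heads in expectation *)

Section OpenHeadBound.

Variables (beta : R) (m : nat) (h : nat -> R).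
Hypotheses (Hb : 0 < beta) (Hm : (0 < m)%nat).
Hypothesis h_new : forall t, (1 <= t)%nat -> (t mod m = 0)%nat -> h t = 0.
Hypothesis h_succ : forall t, (m <= t)%nat -> ((S t) mod m <> 0)%nat ->
  h (S t) = (1 + 1 / tot_weight beta t) * h t + (beta + 1) * INR (t mod m) / tot_weight beta t.

(* Each step inside a block raises h_t * (k m) by at most this amount. *)
Definition open_const : R := 2 * (beta + 1) * INR m.

Lemma mod_block_offset k j : (j < m)%nat -> ((k * m + j) mod m = j)%nat.
Proof. intros H. rewrite Nat.add_comm, Nat.Div0.mod_add. apply Nat.mod_small; auto. Qed.

Lemma open_heads_in_block k j : (2 <= k)%nat -> (j < m)%nat ->
  0 <= h (k * m + j)%nat /\ h (k * m + j)%nat * INR (k * m) <= INR j * open_const.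
Proof.
  intros Hk. induction j as [|j IH]; intros Hj.
  - rewrite Nat.add_0_r, h_new; [simpl; lra | nia | apply Nat.Div0.mod_mul].
  - destruct (IH ltac:(lia)) as [H0 H1]. set (t := (k * m + j)%nat) in *.
    replace (k * m + S j)%nat with (S t) by (unfold t; lia).
    assert (Hmod : (S t mod m <> 0)%nat).
    { unfold t. replace (S (k * m + j)) with (k * m + S j)%nat by lia. rewrite mod_block_offset; lia. }
    rewrite h_succ by (unfold t; nia || exact Hmod).
    assert (Htm : (t mod m = j)%nat) by (apply mod_block_offset; lia). rewrite Htm.
    set (M := INR (k * m)) in *.
    assert (HM2 : 2 * INR m <= M).
    { unfold M. rewrite mult_INR. pose proof (pos_INR m).
      assert (2 <= INR k) by (apply (le_INR 2) in Hk; simpl in Hk; lra). nra. }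
    assert (Hmpos : 0 < INR m) by (apply lt_0_INR; lia).
    assert (HtM : M <= INR t) by (apply le_INR; unfold t; lia).
    assert (HD : INR t <= tot_weight beta t) by (apply tot_weight_ge; auto; unfold t; nia).
    set (D := tot_weight beta t) in *.
    assert (Hj' : INR j <= INR m) by (apply le_INR; lia). pose proof (pos_INR j).
    (* the increment (h + (beta+1) j)/D is nonnegative and, times M, at most open_const *)
    assert (Hhalf : h t <= open_const / 2).
    { apply Rmult_le_reg_r with M; [lra|]. unfold open_const in *.
      assert (0 <= (beta + 1) * INR m * (M - 2 * INR j)) by (apply Rmult_le_pos; nra). nra. }
    assert (Hinc : h t + (beta + 1) * INR j <= open_const) by (unfold open_const in *; nra).
    assert (HMD : 0 <= M / D <= 1).
    { split; [apply Rle_mult_inv_pos; lra|]. apply Rmult_le_reg_r with D; [lra|].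
      unfold Rdiv. rewrite Rmult_assoc, Rinv_l; lra. }
    split.
    + replace ((1 + 1 / D) * h t + (beta + 1) * INR j / D)
        with (h t + (h t + (beta + 1) * INR j) / D) by (field; lra).
      assert (0 <= (h t + (beta + 1) * INR j) / D) by (apply Rle_mult_inv_pos; nra). lra.
    + replace (((1 + 1 / D) * h t + (beta + 1) * INR j / D) * M)
        with (h t * M + (h t + (beta + 1) * INR j) * (M / D)) by (field; lra).
      rewrite S_INR. assert ((h t + (beta + 1) * INR j) * (M / D) <= open_const * 1) by (apply Rmult_le_compat; nra).
      lra.
Qed.

Lemma open_heads_bound : exists K, 0 <= K /\ forall t, (2 * m <= t)%nat -> 0 <= h t <= K / INR t.
Proof.
  exists (2 * INR m * open_const). split; [unfold open_const; pose proof (pos_INR m); nra|].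
  intros t Ht. set (k := (t / m)%nat). set (j := (t mod m)%nat).
  assert (Htkj : t = (k * m + j)%nat) by (unfold k, j; pose proof (Nat.div_mod t m ltac:(lia)); lia).
  assert (Hk : (2 <= k)%nat) by (apply Nat.div_le_lower_bound; lia).
  assert (Hj : (j < m)%nat) by (apply Nat.mod_upper_bound; lia).
  destruct (open_heads_in_block k j Hk Hj) as [H0 H1]. rewrite <- Htkj in H0, H1.
  split; auto.
  assert (HtM : INR t <= 2 * INR (k * m)).
  { rewrite Htkj, plus_INR. assert (INR j <= INR (k * m)) by (apply le_INR; nia). lra. }
  assert (Htpos : 0 < INR t) by (apply lt_0_INR; lia).
  assert (Hj' : INR j <= INR m) by (apply le_INR; lia).
  apply Rmult_le_reg_r with (INR t); auto. unfold Rdiv. rewrite Rmult_assoc, Rinv_l by lra.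
  pose proof (pos_INR m). pose proof (pos_INR j). assert (0 <= open_const) by (unfold open_const; nra). nra.
Qed.

End OpenHeadBound.

(** * A discrete Gronwall estimate with growth exponent c = 2/(2+beta) *)

Lemma ln_1_plus_lower u : 0 < u -> u / (1 + u) <= ln (1 + u).
Proof.
  intros Hu. set (v := / (1 + u)).
  assert (Hv : 0 < v) by (apply Rinv_0_lt_compat; lra).
  assert (H1 : 1 + ln v <= v) by (rewrite <- (exp_ln v) at 2 by auto; apply exp_ineq1_le).
  unfold v in H1. rewrite ln_Rinv in H1 by lra.
  replace (u / (1 + u)) with (1 - / (1 + u)) by (field; lra). lra.
Qed.

Lemma power_growth c y : 0 < c < 1 -> 1 <= y ->
  Rpower y c * (1 + c / (y + 2 - c)) <= Rpower (y + 1) c.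
Proof.
  intros Hc Hy. assert (Hiy : 0 < / y) by (apply Rinv_0_lt_compat; lra).
  replace (y + 1) with (y * (1 + / y)) by (field; lra).
  rewrite <- Rpower_mult_distr by lra.
  assert (Hp : 0 < Rpower y c) by apply exp_pos.
  apply Rmult_le_compat_l; [lra|].
  unfold Rpower at 1. apply Rle_trans with (1 + c * ln (1 + / y)); [|apply exp_ineq1_le].
  pose proof (ln_1_plus_lower (/ y) Hiy) as HL.
  replace (/ y / (1 + / y)) with (1 / (y + 1)) in HL by (field; lra).
  assert (c / (y + 2 - c) <= c * (1 / (y + 1))).
  { unfold Rdiv. rewrite Rmult_1_l. apply Rmult_le_compat_l; [lra|]. apply Rinv_le_contravar; lra. }
  assert (c * (1 / (y + 1)) <= c * ln (1 + / y)) by (apply Rmult_le_compat_l; lra).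
  lra.
Qed.

Section Gronwall.

Variables (beta : R) (e : nat -> R) (T0 : nat) (K : R).
Hypotheses (Hb : 0 < beta) (HT0 : (3 <= T0)%nat) (HK : 0 <= K).
Hypothesis e_step : forall t, (T0 <= t)%nat ->
  Rabs (e (S t) - (1 + 2 / tot_weight beta t) * e t) <= K / INR t.

Let c : R := 2 / (2 + beta).
Let B : R := K * (2 + beta) / 2.

Lemma c_range : 0 < c < 1.
Proof.
  unfold c. split; [apply Rdiv_lt_0_compat; lra|].
  apply Rmult_lt_reg_r with (2 + beta); [lra|]. unfold Rdiv. rewrite Rmult_assoc, Rinv_l; lra.
Qed.

Lemma gronwall_step C t : 0 <= C -> (T0 <= t)%nat ->
  Rabs (e t) <= C * Rpower (INR t - 2) c - B ->
  Rabs (e (S t)) <= C * Rpower (INR (S t) - 2) c - B.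
Proof.
  intros HC Ht IH. pose proof c_range as Hc.
  assert (Htr : 3 <= INR t) by (apply le_INR in Ht, HT0; simpl in HT0; lra).
  assert (HD : 0 < tot_weight beta t) by (apply tot_weight_pos; auto; lia).
  assert (HDt : tot_weight beta t <= (2 + beta) * INR t) by (unfold tot_weight; lra).
  (* 2/tot_weight is exactly the multiplier of [power_growth] at y = t - 2 *)
  assert (H2D : 2 / tot_weight beta t = c / (INR t - 2 + 2 - c)).
  { unfold c, tot_weight in *. field. split; lra. }
  pose proof (power_growth c (INR t - 2) Hc ltac:(lra)) as Hgrow.
  replace (INR t - 2 + 1) with (INR (S t) - 2) in Hgrow by (rewrite S_INR; ring).
  rewrite <- H2D in Hgrow.
  assert (Hpos : 0 < 1 + 2 / tot_weight beta t) by (pose proof (Rdiv_lt_0_compat 2 _ ltac:(lra) HD); lra).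
  assert (Habs : Rabs (e (S t)) <= Rabs (e t) * (1 + 2 / tot_weight beta t) + K / INR t).
  { pose proof (Rabs_triang (e (S t) - (1 + 2 / tot_weight beta t) * e t)
                            ((1 + 2 / tot_weight beta t) * e t)).
    replace (e (S t) - (1 + 2 / tot_weight beta t) * e t + (1 + 2 / tot_weight beta t) * e t)
      with (e (S t)) in H by ring.
    rewrite Rabs_mult, (Rabs_right (1 + 2 / tot_weight beta t)) in H by lra.
    pose proof (e_step t Ht). lra. }
  (* the perturbation K/t is absorbed by the slack B (2/tot_weight) *)
  assert (HKB : K / INR t <= B * (2 / tot_weight beta t)).
  { unfold B, Rdiv. apply Rmult_le_reg_r with (INR t * tot_weight beta t); [nra|].
    replace (K * / INR t * (INR t * tot_weight beta t)) with (K * tot_weight beta t) by (field; lra).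
    replace (K * (2 + beta) * / 2 * (2 * / tot_weight beta t) * (INR t * tot_weight beta t))
      with (K * ((2 + beta) * INR t)) by (field; lra).
    apply Rmult_le_compat_l; lra. }
  assert (Rabs (e t) * (1 + 2 / tot_weight beta t)
          <= (C * Rpower (INR t - 2) c - B) * (1 + 2 / tot_weight beta t))
    by (apply Rmult_le_compat_r; lra).
  assert (C * (Rpower (INR t - 2) c * (1 + 2 / tot_weight beta t)) <= C * Rpower (INR (S t) - 2) c)
    by (apply Rmult_le_compat_l; lra).
  nra.
Qed.

Lemma gronwall_bound :
  exists C, 0 <= C /\ forall t, (T0 <= t)%nat -> Rabs (e t) <= C * Rpower (INR t) (2 / (2 + beta)).
Proof.
  pose proof c_range as Hc.
  assert (HB : 0 <= B) by (unfold B; nra).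
  assert (HT0r : 3 <= INR T0) by (apply le_INR in HT0; simpl in HT0; lra).
  set (P0 := Rpower (INR T0 - 2) c).
  assert (HP0 : 0 < P0) by apply exp_pos.
  set (C := (Rabs (e T0) + B) / P0).
  assert (HC : 0 <= C) by (apply Rle_mult_inv_pos; [pose proof (Rabs_pos (e T0)); lra | lra]).
  assert (Hinv : forall t, (T0 <= t)%nat -> Rabs (e t) <= C * Rpower (INR t - 2) c - B).
  { intros t Ht. induction Ht as [|t Ht IH].
    - unfold C. fold P0. field_simplify; lra.
    - apply gronwall_step; auto. }
  exists C. split; auto. intros t Ht. specialize (Hinv t Ht).
  assert (Htr : 3 <= INR t) by (apply le_INR in Ht; lra).
  assert (Rpower (INR t - 2) c <= Rpower (INR t) c) by (apply Rle_Rpower_l; lra).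
  assert (C * Rpower (INR t - 2) c <= C * Rpower (INR t) c) by (apply Rmult_le_compat_l; lra).
  fold c. lra.
Qed.

End Gronwall.

(* q_exp beta m t = slope * t + corr t + O(t^{2/(2+beta)}). *)
Definition slope (beta : R) (m : nat) : R := (2 + beta + INR m * (2 + 5 * beta)) / beta.

Definition corr_incr (beta : R) (m : nat) (j : R) : R :=
  slope beta m * (2 / (2 + beta)) + 2 + 2 * j + 4 * INR m * beta / (2 + beta) - slope beta m.

Definition corr (beta : R) (m t : nat) : R := rsum (seq 0 (t mod m)) (fun j => corr_incr beta m (INR j)).

Definition err (beta : R) (m t : nat) : R := q_exp beta m t - slope beta m * INR t - corr beta m t.

Lemma rsum_seq0_id n : rsum (seq 0 n) INR = INR n * (INR n - 1) / 2.
Proof.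
  induction n as [|n IH]; [simpl; field|].
  rewrite seq_S, rsum_app, IH, rsum_cons, rsum_nil, S_INR. cbn [Nat.add]. field.
Qed.

(* The slope is chosen so that the increments average to zero over a period. *)
Lemma corr_incr_period beta m : 0 < beta ->
  rsum (seq 0 m) (fun j => corr_incr beta m (INR j)) = 0.
Proof.
  intros Hb. unfold corr_incr.
  rewrite (rsum_ext _ _ (fun j => (slope beta m * (2 / (2 + beta)) + 2 + 4 * INR m * beta / (2 + beta)
                                  - slope beta m) + 2 * INR j)) by (intros; ring).
  rewrite rsum_add, rsum_const, rsum_scal, rsum_seq0_id, length_seq. unfold slope. field. lra.
Qed.

Lemma corr_succ beta m t : 0 < beta -> (0 < m)%nat ->
  corr beta m (S t) = corr beta m t + corr_incr beta m (INR (t mod m)).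
Proof.
  intros Hb Hm. unfold corr. rewrite mod_succ by auto.
  pose proof (Nat.mod_upper_bound t m ltac:(lia)).
  destruct (Nat.eqb_spec (t mod m) (m - 1)) as [E|E].
  - rewrite E. rewrite rsum_nil, <- (corr_incr_period beta m) by auto.
    replace m with (S (m - 1)) at 1 by lia.
    rewrite seq_S, rsum_app, rsum_cons, rsum_nil. cbn [Nat.add]. ring.
  - rewrite seq_S, rsum_app, rsum_cons, rsum_nil. cbn [Nat.add]. ring.
Qed.

Lemma corr_bounded beta m : (0 < m)%nat -> exists P, forall t, Rabs (corr beta m t) <= P.
Proof.
  intros Hm. set (a := slope beta m * (2 / (2 + beta)) + 2 + 4 * INR m * beta / (2 + beta) - slope beta m).
  exists (INR m * (Rabs a + 2 * INR m)). intros t. unfold corr.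
  eapply Rle_trans; [apply (rsum_abs_le _ _ (Rabs a + 2 * INR m))|].
  - intros j Hj. apply in_seq in Hj. pose proof (Nat.mod_upper_bound t m ltac:(lia)).
    assert (INR j <= INR m) by (apply le_INR; lia). pose proof (pos_INR j).
    unfold corr_incr. fold a.
    replace (slope beta m * (2 / (2 + beta)) + 2 + 2 * INR j + 4 * INR m * beta / (2 + beta) - slope beta m)
      with (a + 2 * INR j) by (unfold a; ring).
    pose proof (Rabs_triang a (2 * INR j)). rewrite (Rabs_right (2 * INR j)) in H2 by lra. lra.
  - rewrite length_seq. pose proof (Rabs_pos a). pose proof (pos_INR m).
    apply Rmult_le_compat_r; [lra|]. apply le_INR. pose proof (Nat.mod_upper_bound t m ltac:(lia)). lia.
Qed.

Section ErrorStep.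

Variables (beta : R) (m t : nat).
Hypotheses (Hb : 0 < beta) (Hm : (0 < m)%nat) (Hmt : (m <= t)%nat).

Let D : R := tot_weight beta t.
Let r : R := INR (t mod m).
Let h : R := h_exp beta m t.

(* err_{t+1} - (1 + 2/D) err_t = 2 h_t + (2/D) defect + defect_const/D, where the
   defect is O(1) because h_t and the periodic correction are bounded. *)
Definition defect : R :=
  (1 - beta * (INR m - r)) * h - beta * (INR m - r) * r + (beta + 1) * r + corr beta m t.

Definition defect_const : R := (4 * slope beta m - 4 * INR m * beta * beta) / (2 + beta).

Lemma err_step_identity :
  err beta m (S t) - (1 + 2 / D) * err beta m t = 2 * h + 2 / D * defect + defect_const / D.
Proof.
  assert (HD : 0 < D) by (apply tot_weight_pos; auto; lia).
  unfold err. rewrite q_exp_succ, corr_succ by auto.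
  fold D r h. unfold defect, defect_const, corr_incr, D, tot_weight in *. rewrite S_INR.
  field. lra.
Qed.

Lemma defect_bounded Kh P : 0 <= h <= Kh -> Rabs (corr beta m t) <= P ->
  Rabs defect <= (1 + beta * INR m) * Kh + beta * INR m * INR m + (beta + 1) * INR m + P.
Proof.
  intros [Hh0 HhK] HP.
  assert (Hr : 0 <= r <= INR m).
  { split; [apply pos_INR|]. apply le_INR. pose proof (Nat.mod_upper_bound t m ltac:(lia)). lia. }
  pose proof (Rle_abs (corr beta m t)). pose proof (Rle_abs (- corr beta m t)) as Hn.
  rewrite Rabs_Ropp in Hn.
  assert (H1 : 0 <= (INR m - r) * h <= INR m * Kh) by (split; [nra | apply Rmult_le_compat; lra]).
  assert (H2 : 0 <= (INR m - r) * r <= INR m * INR m) by (split; [nra | apply Rmult_le_compat; lra]).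
  assert (beta * ((INR m - r) * h) <= beta * (INR m * Kh)) by (apply Rmult_le_compat_l; lra).
  assert (beta * ((INR m - r) * r) <= beta * (INR m * INR m)) by (apply Rmult_le_compat_l; lra).
  assert ((beta + 1) * r <= (beta + 1) * INR m) by (apply Rmult_le_compat_l; lra).
  unfold defect. apply Rabs_le. split; nra.
Qed.

End ErrorStep.

Lemma err_step_bound beta m : 0 < beta -> (0 < m)%nat ->
  exists K, 0 <= K /\ forall t, (Nat.max (2 * m) 3 <= t)%nat ->
    Rabs (err beta m (S t) - (1 + 2 / tot_weight beta t) * err beta m t) <= K / INR t.
Proof.
  intros Hb Hm.
  destruct (open_heads_bound beta m (h_exp beta m) Hb Hm) as [Kh [HKh Hh]].
  { intros t Ht Hmod. apply h_exp_new; auto. }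
  { intros t Ht Hmod. apply h_exp_succ; auto. }
  destruct (corr_bounded beta m Hm) as [P HP].
  set (MY := (1 + beta * INR m) * Kh + beta * INR m * INR m + (beta + 1) * INR m + P).
  set (Z := defect_const beta m).
  exists (2 * Kh + 2 * MY + Rabs Z). split.
  { assert (0 <= MY).
    { unfold MY. pose proof (pos_INR m). pose proof (Rabs_pos (corr beta m 0)). pose proof (HP 0%nat).
      assert (0 <= beta * INR m) by nra. assert (0 <= (1 + beta * INR m) * Kh) by nra.
      assert (0 <= beta * INR m * INR m) by nra. nra. }
    pose proof (Rabs_pos Z). lra. }
  intros t Ht.
  assert (Ht3 : 3 <= INR t) by (replace 3 with (INR 3) by (simpl; lra); apply le_INR; lia).
  assert (HD : INR t <= tot_weight beta t) by (apply tot_weight_ge; auto; lia).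
  destruct (Hh t ltac:(lia)) as [Hh0 Hh1].
  assert (HhK : h_exp beta m t <= Kh).
  { apply Rle_trans with (Kh / INR t); auto. unfold Rdiv.
    rewrite <- (Rmult_1_r Kh) at 2. apply Rmult_le_compat_l; auto.
    rewrite <- Rinv_1. apply Rinv_le_contravar; lra. }
  pose proof (defect_bounded beta m t Hb Hm ltac:(lia) Kh P ltac:(lra) (HP t)) as HY. fold MY in HY.
  rewrite err_step_identity by (auto; lia). fold Z.
  set (Y := defect beta m t) in *.
  assert (Hinv : / tot_weight beta t <= / INR t) by (apply Rinv_le_contravar; lra).
  assert (Hip : 0 < / tot_weight beta t) by (apply Rinv_0_lt_compat; lra).
  pose proof (Rabs_triang (2 * h_exp beta m t + 2 / tot_weight beta t * Y) (Z / tot_weight beta t)).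
  pose proof (Rabs_triang (2 * h_exp beta m t) (2 / tot_weight beta t * Y)).
  unfold Rdiv in *. rewrite !Rabs_mult, (Rabs_right 2), (Rabs_right (/ tot_weight beta t)) in * by lra.
  rewrite (Rabs_right (h_exp beta m t)) in * by lra.
  assert (0 <= Rabs Y) by apply Rabs_pos. assert (0 <= Rabs Z) by apply Rabs_pos.
  assert (2 * / tot_weight beta t * Rabs Y <= 2 * / INR t * MY) by (apply Rmult_le_compat; nra).
  assert (Rabs Z * / tot_weight beta t <= Rabs Z * / INR t) by (apply Rmult_le_compat_l; lra).
  nra.
Qed.

Lemma err_growth beta m : 0 < beta -> (0 < m)%nat ->
  exists C, 0 <= C /\ forall t, (Nat.max (2 * m) 3 <= t)%nat ->
    Rabs (err beta m t) <= C * Rpower (INR t) (2 / (2 + beta)).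
Proof.
  intros Hb Hm. destruct (err_step_bound beta m Hb Hm) as [K [HK Hstep]].
  exact (gronwall_bound beta (err beta m) (Nat.max (2 * m) 3) K Hb ltac:(lia) HK Hstep).
Qed.

(* At t = nm the periodic correction vanishes and only err remains. *)
Lemma expected_pairs_residual beta m n : 0 < beta -> (0 < m)%nat -> (1 <= n)%nat ->
  expected_pairs beta m n
  - ((2 + 5 * beta) / (2 * beta) * INR m ^ 2 + (2 - beta) / (2 * beta) * INR m) * INR n
  = err beta m (n * m) / 2 + 1.
Proof.
  intros Hb Hm Hn.
  assert (Hcorr : corr beta m (n * m) = 0) by (unfold corr; rewrite Nat.Div0.mod_mul; reflexivity).
  rewrite expected_pairs_q_exp by auto. unfold err. rewrite Hcorr, mult_INR.
  unfold slope. field. lra.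
Qed.

Lemma Rpower_ge_1 x c : 1 <= x -> 0 <= c -> 1 <= Rpower x c.
Proof. intros Hx Hc. rewrite <- (Rpower_O x) by lra. apply Rle_Rpower; lra. Qed.

Theorem proposition4 (beta : R) (m : nat) (hbeta : 0 < beta) (hm : (0 < m)%nat) :
  exists (C : R) (N0 : nat), forall n : nat, (N0 <= n)%nat ->
    Rabs (expected_pairs beta m n
          - ((2 + 5 * beta) / (2 * beta) * INR m ^ 2
             + (2 - beta) / (2 * beta) * INR m) * INR n)
    <= C * Rpower (INR n) (2 / (2 + beta)).
Proof.
  destruct (err_growth beta m hbeta hm) as [C0 [HC0 He]].
  set (c := 2 / (2 + beta)) in *.
  assert (Hc : 0 <= c) by (apply Rle_mult_inv_pos; lra).
  set (Pm := Rpower (INR m) c).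
  assert (HPm : 0 < Pm) by apply exp_pos.
  exists (C0 * Pm / 2 + 1), (Nat.max (2 * m) 3). intros n Hn.
  assert (Hnr : 1 <= INR n) by (apply (le_INR 1); lia).
  assert (Hmr : 1 <= INR m) by (apply (le_INR 1); lia).
  rewrite expected_pairs_residual by (auto; lia).
  (* (nm)^c = n^c m^c, and n^c >= 1 absorbs the constant 1 *)
  specialize (He (n * m)%nat ltac:(nia)).
  rewrite mult_INR, <- Rpower_mult_distr in He by lra. fold Pm in He.
  set (Pn := Rpower (INR n) c) in *.
  assert (HPn : 1 <= Pn) by (apply Rpower_ge_1; auto).
  pose proof (Rabs_triang (err beta m (n * m) / 2) 1).
  unfold Rdiv in *. rewrite Rabs_mult, (Rabs_right (/ 2)), (Rabs_right 1) in * by lra.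
  nra.
Qed.
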